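(* For all $n\ge1$, $$h_n=\frac52nH_n+\frac32P_n-2H_n,\qquad p_n=\frac52nP_n-\frac32P_n=\frac{5n-3}{2}P_n.$$
   Context: Let $s=\sqrt3/2$. Consider the standard triangular lattice in the plane whose vertices are the points $(a+b/2,\,bs)$ with $a,b\in\mathbb Z$ and whose edges are the unit segments joining lattice points in the directions $0^\circ,60^\circ,120^\circ$; it divides the plane into unit equilateral triangles called cells. A small tile is a single cell; a large tile is an equilateral triangle of side $2$ whose vertices are lattice points (so it is a union of $4$ cells; it may point up or down). For a region $R$ that is a finite union of cells, a tiling of $R$ is a finite set of small and large tiles, each contained in $R$, with pairwise disjoint interiors and union equal to $R$. For $n\ge1$, the region $H_n$ is the union of the trapezoid with vertices $(0,0),(n,0),(n-\tfrac12,s),(\tfrac12,s)$ and the trapezoid with vertices $(\tfrac12,s),(n-\tfrac12,s),(n,2s),(0,2s)$ ($4n-2$ cells; for $n=1$ two unit triangles meeting at a point), and $P_n$ is $H_n$ with the cell with vertices $(n-1,0),(n,0),(n-\tfrac12,s)$ removed. $H_n$ and $P_n$ also denote the numbers of tilings of these regions; thus $H_n=\frac{(1+\sqrt2)^n+(1-\sqrt2)^n}{2}$ and $P_n=\frac{(1+\sqrt2)^n-(1-\sqrt2)^n}{2\sqrt2}$. Define $h_n$ (resp. $p_n$) as the sum, over all tilings of $H_n$ (resp. $P_n$), of the total number of tiles in the tiling. *)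

From HB Require Import structures.
From mathcomp Require Import all_boot all_order all_algebra.
From mathcomp Require Import finmap.
Set Implicit Arguments. Unset Strict Implicit. Unset Printing Implicit Defensive.
Import Order.TTheory GRing.Theory Num.Theory.

Local Open Scope fset_scope.

(* Lattice point (a,b) : int * int  stands for the plane point (a + b/2, b*sqrt3/2).
   A cell is (a, b, up):
     up = true  : the up-pointing cell with vertices (a,b),(a+1,b),(a,b+1);
     up = false : the down-pointing cell with vertices (a+1,b),(a,b+1),(a+1,b+1).
   Every unit triangle of the lattice is exactly one such cell. *)
Definition cell := (int * int * bool)%type.

(* A tile is (k, (a,b)) with k : 'I_4 its kind:
     k = 0 : small tile = the up cell (a,b,true)
     k = 1 : small tile = the down cell (a,b,false)
     k = 2 : large up triangle, vertices (a,b),(a+2,b),(a,b+2)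
     k = 3 : large down triangle, vertices (a+1,b),(a-1,b+2),(a+1,b+2).
   Every side-2 lattice triangle (up or down) is exactly one tile of kind 2/3. *)
Definition tile := ('I_4 * (int * int))%type.

Definition tile_cells (t : tile) : seq cell :=
  let: (k, (a, b)) := t in
  match nat_of_ord k with
  | 0 => [:: (a, b, true)]
  | 1 => [:: (a, b, false)]
  | 2 => [:: (a, b, true); (a + 1, b, true); (a, b + 1, true); (a, b, false)]%R
  | _ => [:: (a, b, false); (a - 1, b + 1, false); (a, b + 1, false);
             (a, b + 1, true)]%R
  end.

Definition is_tiling (R : seq cell) (T : {fset tile}) : bool :=
  [&& all (fun t => all (fun c => c \in R) (tile_cells t)) T,
      all (fun t1 => all (fun t2 => (t1 == t2) ||
             ~~ has (fun c => c \in tile_cells t2) (tile_cells t1)) T) T &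
      all (fun c => has (fun t => c \in tile_cells t) T) R].

(* Finite pool of candidate tiles: every tile (k,(a,b)) contains a cell with
   coordinates (a,b), so every tile contained in R is in this pool. *)
Definition cand_tiles (R : seq cell) : {fset tile} :=
  [fset t in [seq (k, (c.1.1, c.1.2)) | k <- enum 'I_4, c <- R]
     | all (fun c => c \in R) (tile_cells t)].

Definition tilings (R : seq cell) : {fset {fset tile}} :=
  [fset T in fpowerset (cand_tiles R) | is_tiling R T].

Definition num_tilings (R : seq cell) : nat := #|` tilings R|.

Definition total_tiles (R : seq cell) : nat :=
  \sum_(T <- tilings R) #|` T|.

(* Region H_n: bottom row (strip 0 <= y <= s): up cells (a,0), 0<=a<n, and
   down cells (a,0), 0<=a<n-1 (trapezoid (0,0),(n,0),(n-1/2,s),(1/2,s));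
   top row (strip s <= y <= 2s): down cells (a-1,1), 0<=a<n, and up cells
   (a,1), 0<=a<n-1 (trapezoid (1/2,s),(n-1/2,s),(n,2s),(0,2s)). *)
Definition H_region (n : nat) : seq cell :=
  [seq ((a%:Z)%R, 0%R, true) | a <- iota 0 n] ++
  [seq ((a%:Z)%R, 0%R, false) | a <- iota 0 n.-1] ++
  [seq ((a%:Z - 1)%R, 1%R, false) | a <- iota 0 n] ++
  [seq ((a%:Z)%R, 1%R, true) | a <- iota 0 n.-1].

(* P_n: H_n minus the cell with vertices (n-1,0),(n,0),(n-1/2,s),
   i.e. the up cell (n-1, 0). *)
Definition P_region (n : nat) : seq cell :=
  [seq c <- H_region n | c != (((n.-1)%:Z)%R, 0%R, true)].

(* Every large tile of H_n or P_n contains a down cell (a, 0) of the bottom row, with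
   0 <= a <= n - 2, and is determined by a and its orientation; all other cells are small
   tiles.  Writing 0, 1 or 2 at position a for "no large tile", "up", "down" identifies the
   tilings of H_n with the words of length n - 1 over {0, 1, 2} in which no two adjacent
   letters are equal and nonzero (two large tiles of the same orientation at adjacent
   positions overlap), and the tilings of P_n with those words that do not end in 1.  A
   tiling with j large tiles has |R| - 3j tiles, so h_n and p_n only depend on the total
   number L of nonzero letters.  A recursion on the last letter, using the symmetry
   1 <-> 2, gives 2 L_H + P_n = n H_n and 2 L_P = (n - 1) P_n. *)

From HB Require Import structures.
From mathcomp Require Import all_boot all_order all_algebra.
From mathcomp Require Import finmap zify lra.
Import Order.TTheory GRing.Theory Num.Theory.

Set Implicit Arguments.
Unset Strict Implicit.
Unset Printing Implicit Defensive.

Definition compat (x y : nat) : bool := (y == 0) || (x != y).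

Definition nlarge (w : seq nat) : nat := count (fun c => c != 0) w.

Fixpoint words (m : nat) : seq (seq nat) :=
  if m is m'.+1 then
    [seq v <- [seq rcons w c | w <- words m', c <- [:: 0; 1; 2]] | path compat 0 v]
  else [:: [::]].

Lemma wordsS m :
  words m.+1 = [seq v <- [seq rcons w c | w <- words m, c <- [:: 0; 1; 2]] | path compat 0 v].
Proof. by []. Qed.

Lemma mem_words m w :
  (w \in words m) = [&& size w == m, path compat 0 w & all (fun c => c <= 2) w].
Proof.
elim: m w => [|m IHm] w; first by case: w.
rewrite wordsS mem_filter; case/lastP: w => [|v c].
  by apply/negbTE/allpairsP => -[[[|x v] c] [_ _]].
rewrite size_rcons eqSS all_rcons [RHS]andbCA; apply: andb_id2l.
rewrite rcons_path => /andP [pv _].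
apply/allpairsP/andP => [[[v' c'] /= [v'm c'3 /eqP]]|[vm c2]].
  rewrite eqseq_rcons => /andP [/eqP -> /eqP ->].
  rewrite IHm in v'm; case/and3P: v'm => -> _ -> /=; rewrite andbT.
  by move: c'3; rewrite !inE => /or3P [] /eqP ->.
exists (v, c); rewrite IHm vm pv !inE; case/andP: c2.
by case: c => [|[|[|]]].
Qed.

Lemma uniq_words m : uniq (words m).
Proof.
elim: m => [|m IHm] //; rewrite wordsS filter_uniq // allpairs_uniq //.
by move=> [v c] [v' c'] _ _ /= /eqP; rewrite eqseq_rcons => /andP [/eqP -> /eqP ->].
Qed.

Lemma last_words_le2 m w : w \in words m -> last 0 w <= 2.
Proof.
rewrite mem_words => /and3P [_ _]; case/lastP: w => [|w c] //.
by rewrite all_rcons last_rcons => /andP [].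
Qed.

Definition wsum m (phi : nat -> nat -> nat) : nat :=
  \sum_(w <- words m) phi (last 0 w) (nlarge w).

Lemma eq_wsum m phi psi :
  (forall x k, x <= 2 -> phi x k = psi x k) -> wsum m phi = wsum m psi.
Proof. by move=> eq_phi; apply: eq_big_seq => w /last_words_le2; apply: eq_phi. Qed.

Lemma wsumD m phi psi :
  wsum m (fun x k => phi x k + psi x k) = wsum m phi + wsum m psi.
Proof. exact: big_split. Qed.

Lemma wsumS m phi : wsum m.+1 phi =
  wsum m (fun x k => \sum_(c <- [:: 0; 1; 2] | compat x c) phi c (k + (c != 0))).
Proof.
rewrite /wsum wordsS big_filter big_mkcond big_allpairs_dep.
apply: eq_big_seq => w; rewrite mem_words => /and3P [_ pw _].
rewrite [RHS]big_mkcond; apply: eq_bigr => c _.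
by rewrite rcons_path pw last_rcons /nlarge -cats1 count_cat /= addn0.
Qed.

Definition nwords_ending m l := wsum m (fun x _ => x == l).
Definition nlarge_ending m l := wsum m (fun x k => (x == l) * k).

Lemma nwords_endingS m :
  [/\ nwords_ending m.+1 0 = nwords_ending m 0 + nwords_ending m 1 + nwords_ending m 2,
      nwords_ending m.+1 1 = nwords_ending m 0 + nwords_ending m 2
    & nwords_ending m.+1 2 = nwords_ending m 0 + nwords_ending m 1].
Proof.
by split; rewrite /nwords_ending wsumS -!wsumD; apply: eq_wsum => -[|[|[|x]]] k // _;
  rewrite /compat !big_cons big_nil.
Qed.

Lemma nlarge_endingS m :
  [/\ nlarge_ending m.+1 0 = nlarge_ending m 0 + nlarge_ending m 1 + nlarge_ending m 2,
      nlarge_ending m.+1 1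
        = nlarge_ending m 0 + nlarge_ending m 2 + nwords_ending m 0 + nwords_ending m 2
    & nlarge_ending m.+1 2
        = nlarge_ending m 0 + nlarge_ending m 1 + nwords_ending m 0 + nwords_ending m 1].
Proof.
by split; rewrite /nlarge_ending /nwords_ending wsumS -!wsumD;
  apply: eq_wsum => -[|[|[|x]]] k // _; rewrite /compat !big_cons big_nil //=; lia.
Qed.

Lemma ending_invariants m :
  [/\ nwords_ending m 1 = nwords_ending m 2, nlarge_ending m 1 = nlarge_ending m 2,
      2 * (nlarge_ending m 0 + nlarge_ending m 1 + nlarge_ending m 2)
        + nwords_ending m 0 + nwords_ending m 2
        = m.+1 * (nwords_ending m 0 + nwords_ending m 1 + nwords_ending m 2)
    & 2 * (nlarge_ending m 0 + nlarge_ending m 2) = m * (nwords_ending m 0 + nwords_ending m 2)].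
Proof.
elim: m => [|m [e12 l12 IH3 IH4]]; first by rewrite /nlarge_ending /nwords_ending /wsum !big_seq1.
have [e0 e1 e2] := nwords_endingS m; have [l0 l1 l2] := nlarge_endingS m.
rewrite e0 e1 e2 l0 l1 l2 -e12 -l12; rewrite -e12 -l12 in IH3 IH4.
split; lia.
Qed.

Lemma wsum_not_ending1 m : wsum m (fun x _ => x != 1) = nwords_ending m 0 + nwords_ending m 2.
Proof. by rewrite /nwords_ending -!wsumD; apply: eq_wsum => -[|[|[|x]]]. Qed.

Lemma sum_nlarge_words m :
  2 * wsum m (fun _ k => k) + wsum m (fun x _ => x != 1) = m.+1 * wsum m (fun _ _ => 1).
Proof.
have -> : wsum m (fun _ k => k) = nlarge_ending m 0 + nlarge_ending m 1 + nlarge_ending m 2.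
  by rewrite /nlarge_ending -!wsumD; apply: eq_wsum => -[|[|[|x]]] k //= _; lia.
have -> : wsum m (fun _ _ => 1) = nwords_ending m 0 + nwords_ending m 1 + nwords_ending m 2.
  by rewrite /nwords_ending -!wsumD; apply: eq_wsum => -[|[|[|x]]].
by have [e12 l12 + _] := ending_invariants m; rewrite wsum_not_ending1; lia.
Qed.

Lemma sum_nlarge_words_not_ending1 m :
  2 * wsum m (fun x k => if x != 1 then k else 0) = m * wsum m (fun x _ => x != 1).
Proof.
have -> : wsum m (fun x k => if x != 1 then k else 0) = nlarge_ending m 0 + nlarge_ending m 2.
  by rewrite /nlarge_ending -!wsumD; apply: eq_wsum => -[|[|[|x]]] k //= _; lia.
by have [_ _ _] := ending_invariants m; rewrite wsum_not_ending1.
Qed.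

Definition kind0 : 'I_4 := @Ordinal 4 0 isT.
Definition kind1 : 'I_4 := @Ordinal 4 1 isT.
Definition kind2 : 'I_4 := @Ordinal 4 2 isT.
Definition kind3 : 'I_4 := @Ordinal 4 3 isT.

Definition small_tile (c : cell) : tile := (if c.2 then kind0 else kind1, (c.1.1, c.1.2)).

Definition large_tile (a l : nat) : tile := (if l == 1 then kind2 else kind3, (a%:Z, 0)%R).

Definition large_tiles (w : seq nat) : seq tile :=
  [seq large_tile a (nth 0 w a) | a <- iota 0 (size w) & nth 0 w a != 0].

Definition covered (L : seq tile) (c : cell) : bool := has (fun t => c \in tile_cells t) L.

Definition overlap (t1 t2 : tile) : bool := has (fun c => c \in tile_cells t2) (tile_cells t1).

Definition word_tiles (R : seq cell) (w : seq nat) : seq tile :=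
  large_tiles w ++ [seq small_tile c | c <- R & ~~ covered (large_tiles w) c].

Definition tiling_of_word (R : seq cell) (w : seq nat) : {fset tile} :=
  [fset t in word_tiles R w]%fset.

Definition letter (T : {fset tile}) (a : nat) : nat :=
  if large_tile a 1 \in T then 1 else if large_tile a 2 \in T then 2 else 0.

Definition word_of_tiling (m : nat) (T : {fset tile}) : seq nat :=
  [seq letter T a | a <- iota 0 m].

Lemma tile_cells_small c : tile_cells (small_tile c) = [:: c].
Proof. by case: c => [[x y] []]. Qed.

Lemma overlap_small c t : overlap (small_tile c) t = (c \in tile_cells t).
Proof. by rewrite /overlap tile_cells_small /= orbF. Qed.

Lemma overlap_smallr t c : overlap t (small_tile c) = (c \in tile_cells t).
Proof.
rewrite /overlap tile_cells_small; apply/hasP/idP => [[c' ct' /[1!inE] /eqP <-]|ct] //.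
by exists c; rewrite ?inE.
Qed.

Lemma small_tile_inj : injective small_tile.
Proof. by move=> [[x y] []] [[x' y'] []] [] //= -> ->. Qed.

Lemma small_tile_kind c : (small_tile c).1 < 2.
Proof. by case: c => [[x y] []]. Qed.

Lemma large_tile_kind a l : 2 <= (large_tile a l).1.
Proof. by rewrite /large_tile; case: (l == 1). Qed.

Lemma small_tileE (k : 'I_4) x : k < 2 ->
  exists u, tile_cells (k, x) = [:: (x.1, x.2, u)] /\ (k, x) = small_tile (x.1, x.2, u).
Proof.
case: x => a b; case: k => [[|[|]] lt_k4] // _.
- by exists true; split => //; congr pair; apply: val_inj.
- by exists false; split => //; congr pair; apply: val_inj.
Qed.

Lemma large_tileE (k : 'I_4) (a : nat) : 2 <= k ->
  (k, (a%:Z, 0)%R) = large_tile a (if k == 2 :> nat then 1 else 2).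
Proof.
by case: k => [[|[|[|[|k]]]] lt_k4] //= _; congr pair; apply: val_inj.
Qed.

Lemma large_tile_inj a a' l l' : large_tile a l = large_tile a' l' -> a = a'.
Proof. by case. Qed.

Lemma eq_large_tile a a' l l' : 0 < l <= 2 -> 0 < l' <= 2 ->
  (large_tile a l == large_tile a' l') = (a == a') && (l == l').
Proof.
by case: l => [|[|[|]]] // _; case: l' => [|[|[|]]] // _;
  rewrite /large_tile !xpair_eqE /= ?andbT ?andbF.
Qed.

Lemma uniq_large_tile_cells a l : uniq (tile_cells (large_tile a l)).
Proof.
rewrite /large_tile; case: (l == 1) => /=;
  rewrite !in_cons !xpair_eqE !in_nil !eqxx /=; lia.
Qed.

Lemma size_large_tile_cells a l : size (tile_cells (large_tile a l)) = 4.
Proof. by rewrite /large_tile; case: (l == 1). Qed.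

Lemma tile_anchor (t : tile) : exists2 c, c \in tile_cells t & (c.1.1, c.1.2) = t.2.
Proof.
case: t => [[[|[|[|[|k]]]] lt_k4] [a b]] //=.
- by exists (a, b, true); rewrite ?inE ?eqxx.
- by exists (a, b, false); rewrite ?inE ?eqxx.
- by exists (a, b, true); rewrite ?inE ?eqxx.
- by exists (a, b, false); rewrite ?inE ?eqxx.
Qed.

Lemma large_tilesP w t :
  reflect (exists2 a, a < size w & nth 0 w a != 0 /\ t = large_tile a (nth 0 w a))
          (t \in large_tiles w).
Proof.
apply: (iffP mapP) => [[a]|[a lt_a [nz_a ->]]].
  by rewrite mem_filter mem_iota add0n => /andP [nz_a /andP [_ lt_a]] ->; exists a.
by exists a => //; rewrite mem_filter mem_iota add0n nz_a lt_a.
Qed.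

Lemma size_large_tiles w : size (large_tiles w) = nlarge w.
Proof.
rewrite size_map size_filter /nlarge -[in RHS](mkseq_nth 0 w) /mkseq count_map.
exact: eq_count.
Qed.

Lemma uniq_large_tiles w : uniq (large_tiles w).
Proof.
rewrite map_inj_in_uniq ?filter_uniq ?iota_uniq //.
by move=> a b _ _ /large_tile_inj.
Qed.

Lemma is_tilingP R (T : {fset tile}) : reflect
  [/\ forall t, t \in T -> {subset tile_cells t <= R},
      {in T &, forall t1 t2, overlap t1 t2 -> t1 = t2}
    & forall c, c \in R -> exists2 t, t \in T & c \in tile_cells t]
  (is_tiling R T).
Proof.
apply: (iffP and3P) => [[/allP sub /allP disj /allP cover]|[sub disj cover]]; split.
- by move=> t /sub /allP.
- by move=> t1 t2 /disj /allP /[apply] /orP [/eqP //|/negP nov /nov].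
- by move=> c /cover /hasP [t Tt ct]; exists t.
- by apply/allP => t /sub Tt; apply/allP.
- apply/allP => t1 T1; apply/allP => t2 T2.
  rewrite -/(overlap t1 t2); case: (boolP (overlap t1 t2)) => [/(disj _ _ T1 T2) ->|];
    by rewrite ?eqxx ?orbT.
- by apply/allP => c /cover [t Tt ct]; apply/hasP; exists t.
Qed.

Lemma mem_tilings R T : (T \in tilings R) = (T `<=` cand_tiles R)%fset && is_tiling R T.
Proof. by rewrite /tilings in_fset inE /= -fpowersetE. Qed.

Lemma mem_cand_tiles R t : (t \in cand_tiles R) =
  (t \in [seq (k, (c.1.1, c.1.2)) | k <- enum 'I_4, c <- R])
  && all (fun c => c \in R) (tile_cells t).
Proof. by rewrite /cand_tiles in_fset inE. Qed.

Lemma count_mem_sub (T : eqType) (s r : seq T) : uniq s -> uniq r -> {subset s <= r} ->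
  count (fun x => x \in s) r = size s.
Proof.
move=> Us Ur sr; rewrite -size_filter; apply/perm_size/uniq_perm; rewrite ?filter_uniq //.
by move=> x; rewrite mem_filter; case sx: (x \in s) => //=; rewrite sr.
Qed.

Lemma count_covered (R : seq cell) (L : seq tile) : uniq R -> uniq L ->
  (forall t, t \in L -> [/\ size (tile_cells t) = 4, uniq (tile_cells t)
                          & {subset tile_cells t <= R}]) ->
  {in L &, forall t1 t2, overlap t1 t2 -> t1 = t2} ->
  count (covered L) R = 4 * size L.
Proof.
move=> UR; elim: L => [|t L IHL] /=; first by rewrite muln0; elim: (R) => //= ? ? ->.
move=> /andP [tL UL] tileL disjL.
pose in_t c := c \in tile_cells t.
have -> : count (covered (t :: L)) R = count (predU in_t (covered L)) R by apply: eq_count.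
have := count_predUI in_t (covered L) R.
have -> : count (predI in_t (covered L)) R = 0.
  apply/eqP; rewrite -leqn0 leqNgt -has_count; apply/hasPn => c _ /=.
  apply/negP => /andP [ct /hasP [t' t'L ct']]; move: tL.
  by rewrite (disjL t t') ?inE ?eqxx ?t'L ?orbT //; apply/hasP; exists c.
have [size_t Ut sub_t] := tileL t (mem_head _ _).
rewrite addn0 count_mem_sub // size_t IHL ?mulnS // => [t0 t0L|t1 t2 t1L t2L].
  by apply: tileL; rewrite inE t0L orbT.
by apply: disjL; rewrite inE ?t1L ?t2L orbT.
Qed.

Lemma overlap_large_tiles a a' l l' : 0 < l <= 2 -> 0 < l' <= 2 ->
  overlap (large_tile a l) (large_tile a' l')
  = (a == a') || (l == l') && ((a' == a.+1) || (a == a'.+1)).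
Proof.
case: l => [|[|[|]]] // _; case: l' => [|[|[|]]] // _;
  rewrite /overlap /= !in_cons !in_nil !xpair_eqE /=; apply/idP/idP; lia.
Qed.

Lemma large_tiles_disjoint w : path compat 0 w -> all (fun c => c <= 2) w ->
  {in large_tiles w &, forall t1 t2, overlap t1 t2 -> t1 = t2}.
Proof.
move=> /(pathP 0) compat_w /allP le2_w t1 t2.
move=> /large_tilesP [a lt_a [nz_a ->]] /large_tilesP [a' lt_a' [nz_a' ->]].
have range b : b < size w -> nth 0 w b != 0 -> 0 < nth 0 w b <= 2.
  by move=> lt_b nz_b; rewrite lt0n nz_b le2_w ?mem_nth.
rewrite overlap_large_tiles ?range //.
case/orP => [/eqP -> //|/andP [/eqP eq_l /orP [] /eqP eq_a]].
- by have := compat_w a' lt_a'; rewrite eq_a /= /compat -eq_a -eq_l eqxx (negbTE nz_a).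
- by have := compat_w a lt_a; rewrite eq_a /= /compat -eq_a eq_l eqxx (negbTE nz_a').
Qed.

Lemma mem_tiling_of_word R w t : (t \in tiling_of_word R w) =
  (t \in large_tiles w) || (t \in [seq small_tile c | c <- R & ~~ covered (large_tiles w) c]).
Proof. by rewrite /tiling_of_word in_fset mem_cat. Qed.

Lemma mem_tiling_of_word_large R w (k : 'I_4) x : 2 <= k ->
  ((k, x) \in tiling_of_word R w) = ((k, x) \in large_tiles w).
Proof.
move=> ge2_k; rewrite mem_tiling_of_word orbC.
case: (boolP (_ \in map _ _)) => // /mapP [c _ eq_kx].
by have := small_tile_kind c; rewrite -eq_kx /=; lia.
Qed.

Lemma letter_tiling_of_word R w a : all (fun c => c <= 2) w -> a < size w ->
  letter (tiling_of_word R w) a = nth 0 w a.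
Proof.
move=> /allP le2_w lt_a; have le2_a := le2_w _ (mem_nth 0 lt_a).
have large_in l : 0 < l <= 2 -> (large_tile a l \in tiling_of_word R w) = (nth 0 w a == l).
  move=> l_range; rewrite mem_tiling_of_word_large ?large_tile_kind //.
  apply/large_tilesP/eqP => [[a' lt_a' [nz_a' /eqP]]|eq_l].
    have l'_range : 0 < nth 0 w a' <= 2 by rewrite lt0n nz_a' le2_w ?mem_nth.
    by rewrite -/(large_tile a l) eq_large_tile // => /andP [/eqP -> /eqP].
  by exists a; rewrite ?eq_l //; case: (l) l_range.
rewrite /letter !large_in //.
by case: (nth 0 w a) le2_a => [|[|[|]]].
Qed.

Lemma word_of_tiling_of_word R w : all (fun c => c <= 2) w ->
  word_of_tiling (size w) (tiling_of_word R w) = w.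
Proof.
move=> le2_w; rewrite /word_of_tiling -[RHS](mkseq_nth 0) /mkseq.
by apply/eq_in_map => a; rewrite mem_iota => /andP [_ lt_a]; rewrite letter_tiling_of_word.
Qed.

Lemma letter_le2 T a : letter T a <= 2.
Proof. by rewrite /letter; case: ifP => //; case: ifP. Qed.

Lemma large_tile_letter T a : letter T a != 0 -> large_tile a (letter T a) \in T.
Proof. by rewrite /letter; case: ifP => // _; case: ifP. Qed.

Lemma letter_large R T a l : is_tiling R T -> 0 < l <= 2 -> large_tile a l \in T ->
  letter T a = l.
Proof.
case/is_tilingP => _ disj _; case: l => [|[|[|]]] // _ T2; rewrite /letter T2 //.
case: ifP => // T1; move: (disj _ _ T1 T2).
by rewrite overlap_large_tiles // eqxx => /(_ isT) /eqP; rewrite eq_large_tile // andbF.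
Qed.

Lemma size_word_of_tiling m T : size (word_of_tiling m T) = m.
Proof. by rewrite size_map size_iota. Qed.

Lemma nth_word_of_tiling m T a : a < m -> nth 0 (word_of_tiling m T) a = letter T a.
Proof. by move=> lt_a; rewrite (nth_map 0) ?size_iota // nth_iota. Qed.

Section StripTilings.

Variables (R : seq cell) (m : nat) (up_last : bool).
Hypothesis uniq_R : uniq R.
(* R is a strip of length m: its large tiles are the ones based at (a, 0), 0 <= a < m,
   except the upward one at a = m - 1 when up_last is false. *)
Hypothesis large_fits : forall (k : 'I_4) (a b : int), 2 <= k ->
  all (fun c => c \in R) (tile_cells (k, (a, b))) =
  [&& b == 0, 0 <= a, a < m%:Z & up_last || (k != 2%N :> nat) || (a + 1 != m%:Z)]%R.

Definition allowed_words : seq (seq nat) :=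
  [seq w <- words m | up_last || (last 0 w != 1)].

Lemma mem_allowed_words w : (w \in allowed_words) =
  [&& up_last || (last 0 w != 1), size w == m, path compat 0 w & all (fun c => c <= 2) w].
Proof. by rewrite mem_filter mem_words. Qed.

Lemma large_tile_sub w a : w \in allowed_words -> a < size w -> nth 0 w a != 0 ->
  {subset tile_cells (large_tile a (nth 0 w a)) <= R}.
Proof.
rewrite mem_allowed_words => /and4P [last_ok /eqP size_w _ _] lt_a nz_a; apply/allP.
rewrite /large_tile large_fits; last by case: (_ == 1).
apply/and4P; split => //; first by lia.
case: (boolP up_last) => //= no_up; case: (nth 0 w a =P 1) => //= last_a.
apply/eqP => a_last; move: last_ok; rewrite (negbTE no_up) -nth_last.
have -> : (size w).-1 = a by lia.
by rewrite last_a.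
Qed.

Lemma tiling_of_word_tiling w : w \in allowed_words -> tiling_of_word R w \in tilings R.
Proof.
move=> allowed_w; have := allowed_w; rewrite mem_allowed_words => /and4P [_ _ path_w le2_w].
have sub t : t \in tiling_of_word R w -> {subset tile_cells t <= R}.
  rewrite mem_tiling_of_word => /orP [/large_tilesP [a lt_a [nz_a ->]]|/mapP [c]].
    exact: large_tile_sub.
  by rewrite mem_filter => /andP [_ cR] -> x; rewrite tile_cells_small inE => /eqP ->.
rewrite mem_tilings; apply/andP; split.
  apply/fsubsetP => t Tt; rewrite mem_cand_tiles; apply/andP; split; last exact/allP/sub.
  have [c ct anchor_c] := tile_anchor t.
  apply/allpairsP; exists (t.1, c) => /=; rewrite mem_enum anchor_c (sub t) //.
  by case: (t).
apply/is_tilingP; split => // [t1 t2|c cR].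
  rewrite !mem_tiling_of_word => /orP [L1|/mapP [c1 Uc1 ->]] /orP [L2|/mapP [c2 Uc2 ->]].
  - exact: (large_tiles_disjoint path_w le2_w L1 L2).
  - rewrite overlap_smallr => ct1.
    by move: Uc2; rewrite mem_filter => /andP [/hasP []]; exists t1.
  - rewrite overlap_small => ct2.
    by move: Uc1; rewrite mem_filter => /andP [/hasP []]; exists t2.
  - by rewrite overlap_small tile_cells_small inE => /eqP ->.
case: (boolP (covered (large_tiles w) c)) => [/hasP [t Lt ct]|uncov].
  by exists t; rewrite // mem_tiling_of_word Lt.
exists (small_tile c); last by rewrite tile_cells_small mem_head.
by rewrite mem_tiling_of_word; apply/orP; right; apply/map_f; rewrite mem_filter uncov.
Qed.

Section TilingToWord.

Variable T : {fset tile}.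
Hypothesis T_tiling : is_tiling R T.

Lemma large_tile_of_tiling t : t \in T -> 2 <= t.1 ->
  exists2 a, a < m & letter T a != 0 /\ t = large_tile a (letter T a).
Proof.
case/is_tilingP: T_tiling => sub _ _; case: t => [k [x y]] Tt ge2_k.
have := large_fits x y ge2_k; rewrite (_ : all _ _ = true); last exact/allP/sub.
case/esym/and4P => /eqP y0 ge0_x lt_x _; rewrite {}y0 in Tt *.
have [a x_a] : exists a : nat, x = (a%:Z)%R by exists `|x|%N; lia.
rewrite {}x_a in Tt lt_x *; rewrite large_tileE // in Tt *.
set l := (if _ then _ else _) in Tt *; have l_range : 0 < l <= 2 by rewrite /l; case: ifP.
exists a; first by lia.
by rewrite (letter_large T_tiling l_range Tt) -lt0n; case/andP: l_range.
Qed.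

Lemma word_of_tiling_allowed : word_of_tiling m T \in allowed_words.
Proof.
case/is_tilingP: T_tiling => sub disj _.
rewrite mem_allowed_words size_word_of_tiling eqxx /=; apply/and3P; split.
- case: (boolP up_last) => //= no_up; rewrite -nth_last size_word_of_tiling.
  have [->|m_gt0] := posnP m; first by rewrite nth_default ?size_word_of_tiling.
  rewrite nth_word_of_tiling ?ltn_predL //; apply/eqP => letter1.
  have := @large_tile_letter T m.-1; rewrite letter1 => /(_ isT) T1.
  have /allP := sub _ T1; rewrite large_fits // (negbTE no_up) /=; lia.
- apply/(pathP 0) => -[|j]; rewrite size_word_of_tiling => lt_j /=.
    by rewrite /compat eq_sym orbN.
  rewrite !nth_word_of_tiling ?(ltnW lt_j) // /compat.
  case: (eqVneq (letter T j.+1) 0) => [->//|nz1] /=; apply/eqP => same.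
  have l_range : 0 < letter T j <= 2 by rewrite same lt0n nz1 letter_le2.
  have Tj : large_tile j (letter T j) \in T.
    by rewrite large_tile_letter // -lt0n; case/andP: l_range.
  have Tj1 : large_tile j.+1 (letter T j) \in T by rewrite same large_tile_letter.
  move: (disj _ _ Tj Tj1); rewrite overlap_large_tiles // !eqxx /= orbT => /(_ isT) /eqP.
  by rewrite eq_large_tile //; lia.
- by apply/allP => x /mapP [a _ ->]; apply: letter_le2.
Qed.

Lemma mem_large_tiles_word_of_tiling t :
  (t \in large_tiles (word_of_tiling m T)) = (t \in T) && (2 <= t.1).
Proof.
apply/large_tilesP/andP => [[a lt_a [nz ->]]|[Tt ge2]].
  rewrite size_word_of_tiling in lt_a; rewrite nth_word_of_tiling // in nz *.
  by rewrite large_tile_letter // large_tile_kind.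
have [a lt_a [nz ->]] := large_tile_of_tiling Tt ge2.
by exists a; rewrite ?size_word_of_tiling ?nth_word_of_tiling.
Qed.

Lemma tiling_of_word_of_tiling : tiling_of_word R (word_of_tiling m T) = T.
Proof.
case/is_tilingP: T_tiling => sub disj cover.
apply/fsetP => t; rewrite mem_tiling_of_word mem_large_tiles_word_of_tiling.
have [ge2|lt2] := leqP 2 t.1.
  rewrite andbT orbC; case: (boolP (_ \in map _ _)) => // /mapP [c _ eq_t].
  by have := small_tile_kind c; rewrite -eq_t ltnNge ge2.
rewrite andbF /=; case: t lt2 => k x lt2.
have [u [_ ->]] := small_tileE x lt2; set c := (x.1, x.2, u).
rewrite (mem_map small_tile_inj) mem_filter; apply/andP/idP => [[uncov cR]|Tc].
  have [t' Tt' ct'] := cover c cR; have [ge2'|lt2'] := leqP 2 t'.1.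
    case/hasP: uncov; exists t' => //.
    by rewrite mem_large_tiles_word_of_tiling Tt'.
  case: t' Tt' ct' lt2' => k' x' Tt' ct' lt2'.
  have [u' [cells' eq_t']] := small_tileE x' lt2'.
  by move: ct'; rewrite cells' inE => /eqP eq_c; rewrite eq_t' -eq_c in Tt'.
split; last by apply: (sub _ Tc); rewrite tile_cells_small mem_head.
apply/negP => /hasP [t' /[1!mem_large_tiles_word_of_tiling] /andP [Tt' ge2'] ct'].
move: (disj _ _ Tc Tt'); rewrite overlap_small => /(_ ct') eq_t'.
by move: ge2'; rewrite -eq_t' leqNgt small_tile_kind.
Qed.

End TilingToWord.

Lemma card_tiling_of_word w : w \in allowed_words ->
  #|` tiling_of_word R w| + 3 * nlarge w = size R.
Proof.
move=> allowed_w; have := allowed_w; rewrite mem_allowed_words => /and4P [_ _ path_w le2_w].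
have uniq_tiles : uniq (word_tiles R w).
  rewrite cat_uniq uniq_large_tiles (map_inj_uniq small_tile_inj) filter_uniq // andbT.
  apply/hasPn => t /mapP [c _ ->]; apply/negP => /large_tilesP [a _ [_ eq_t]].
  by have := small_tile_kind c; rewrite eq_t; have := large_tile_kind a (nth 0 w a); lia.
have cover_large : count (covered (large_tiles w)) R = 4 * nlarge w.
  rewrite -size_large_tiles; apply: count_covered => //.
  - exact: uniq_large_tiles.
  - move=> t /large_tilesP [a lt_a [nz_a ->]].
    by rewrite size_large_tile_cells uniq_large_tile_cells; split=> //; apply: large_tile_sub.
  - by move=> t1 t2; apply: large_tiles_disjoint.
rewrite /tiling_of_word card_fseq undup_id // size_cat size_large_tiles size_map size_filter.
have := count_predC (covered (large_tiles w)) R.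
by rewrite cover_large -[count (predC _) _]/(count (fun c => ~~ covered (large_tiles w) c) R); lia.
Qed.

Lemma perm_tilings : perm_eq (tilings R) [seq tiling_of_word R w | w <- allowed_words].
Proof.
apply: uniq_perm; first exact: fset_uniq.
  rewrite map_inj_in_uniq ?filter_uniq ?uniq_words // => w1 w2.
  rewrite !mem_allowed_words => /and4P [_ /eqP <- _ le2_w1] /and4P [_ /eqP size_w2 _ le2_w2] eq_T.
  by rewrite -(word_of_tiling_of_word R le2_w1) eq_T -size_w2 word_of_tiling_of_word.
move=> T; apply/idP/mapP => [T_tiling|[w allowed_w ->]]; last exact: tiling_of_word_tiling.
have is_tiling_T : is_tiling R T by move: T_tiling; rewrite mem_tilings => /andP [].
exists (word_of_tiling m T); first exact: word_of_tiling_allowed.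
by rewrite tiling_of_word_of_tiling.
Qed.

Lemma count_tilings :
  num_tilings R = wsum m (fun x _ => up_last || (x != 1)) /\
  total_tiles R + 3 * wsum m (fun x k => if up_last || (x != 1) then k else 0)
    = size R * num_tilings R.
Proof.
have num : num_tilings R = wsum m (fun x _ => up_last || (x != 1)).
  rewrite /num_tilings (perm_size perm_tilings) size_map size_filter /wsum.
  by rewrite -sum1_count big_mkcond.
split => //; rewrite num /total_tiles (perm_big _ perm_tilings) big_map big_filter /wsum.
rewrite big_mkcond !big_distrr -big_split /=.
apply: eq_big_seq => w words_w; case: ifP => allowed_w; last by rewrite !muln0.
by rewrite muln1 card_tiling_of_word // mem_filter allowed_w.
Qed.

End StripTilings.

Lemma mem_H_region m (x y : int) (u : bool) : ((x, y, u) \in H_region m.+1) =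
  (if u then (y == 0) && (0 <= x <= m%:Z) || (y == 1) && (0 <= x < m%:Z)
  else (y == 0) && (0 <= x < m%:Z) || (y == 1) && (-1 <= x < m%:Z))%R.
Proof.
rewrite /H_region !mem_cat [(m.+1).-1]/=; apply/idP/idP.
  by case/or4P => /mapP [a]; rewrite mem_iota add0n => lt_a [-> -> ->]; lia.
case: u => /orP [] /andP [/eqP -> x_range]; apply/or4P;
  [constructor 1|constructor 4|constructor 2|constructor 3]; apply/mapP.
- by exists `|x|%N; [rewrite mem_iota; lia | congr (_, _, _); lia].
- by exists `|x|%N; [rewrite mem_iota; lia | congr (_, _, _); lia].
- by exists `|x|%N; [rewrite mem_iota; lia | congr (_, _, _); lia].
- by exists `|(x + 1)%R|%N; [rewrite mem_iota; lia | congr (_, _, _); lia].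
Qed.

Lemma mem_P_region m x y u : ((x, y, u) \in P_region m.+1) =
  ((x, y, u) \in H_region m.+1) && ~~ [&& x == m%:Z, y == 0 & u]%R.
Proof.
rewrite /P_region mem_filter andbC [(m.+1).-1]/= !xpair_eqE.
by case: u; rewrite ?andbT ?andbF.
Qed.

Lemma large_fits_H m (k : 'I_4) (a b : int) : 2 <= k ->
  all (fun c => c \in H_region m.+1) (tile_cells (k, (a, b))) =
  [&& b == 0, 0 <= a, a < m%:Z & true || (k != 2%N :> nat) || (a + 1 != m%:Z)]%R.
Proof.
by case: k => [[|[|[|[|k]]]] lt_k4] //= _; rewrite !mem_H_region /=; apply/idP/idP; lia.
Qed.

Lemma large_fits_P m (k : 'I_4) (a b : int) : 2 <= k ->
  all (fun c => c \in P_region m.+1) (tile_cells (k, (a, b))) =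
  [&& b == 0, 0 <= a, a < m%:Z & false || (k != 2%N :> nat) || (a + 1 != m%:Z)]%R.
Proof.
by case: k => [[|[|[|[|k]]]] lt_k4] //= _;
  rewrite !mem_P_region !mem_H_region /=; apply/idP/idP; lia.
Qed.

Lemma uniq_H_region m : uniq (H_region m.+1).
Proof.
have inj_row (y : int) (u : bool) : injective (fun a : nat => ((a%:Z)%R, y, u)).
  by move=> a b [].
have inj_shift : injective (fun a : nat => ((a%:Z - 1)%R, 1%R, false) : cell).
  by move=> a b [] ?; lia.
have disj (f g : nat -> cell) s t : (forall a b, f a != g b) ->
    has (fun c => c \in map f s) (map g t) = false.
  move=> fg; apply/hasPn => _ /mapP [b _ ->].
  by apply/negP => /mapP [a _ /eqP]; rewrite eq_sym (negbTE (fg a b)).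
rewrite /H_region [(m.+1).-1]/= !cat_uniq !map_inj_uniq ?iota_uniq // !has_cat !disj //;
  by move=> a b; rewrite !xpair_eqE /= ?andbF.
Qed.

Lemma uniq_P_region m : uniq (P_region m.+1).
Proof. exact/filter_uniq/uniq_H_region. Qed.

Lemma size_H_region m : size (H_region m.+1) = 4 * m + 2.
Proof. rewrite /H_region !size_cat !size_map !size_iota /=; lia. Qed.

Lemma size_P_region m : size (P_region m.+1) = 4 * m + 1.
Proof.
pose c0 : cell := ((m%:Z)%R, 0%R, true).
have H_c0 : c0 \in H_region m.+1 by rewrite mem_H_region; lia.
have := count_predC (pred1 c0) (H_region m.+1).
rewrite count_uniq_mem ?uniq_H_region // H_c0 size_H_region /P_region size_filter.
by rewrite -[count (predC _) _]/(count (fun c => c != c0) (H_region m.+1)); lia.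
Qed.

Local Open Scope ring_scope.

Theorem theorem6 (n : nat) : (1 <= n)%N ->
  let Hn : rat := (num_tilings (H_region n))%:R in
  let Pn : rat := (num_tilings (P_region n))%:R in
  (total_tiles (H_region n))%:R = 5 / 2 * n%:R * Hn + 3 / 2 * Pn - 2 * Hn
  /\ (total_tiles (P_region n))%:R = 5 / 2 * n%:R * Pn - 3 / 2 * Pn
  /\ (total_tiles (P_region n))%:R = (5 * n%:R - 3) / 2 * Pn.
Proof.
case: n => [//|m] _ /=.
have [num_H total_H] := count_tilings (uniq_H_region m) (large_fits_H m).
have [num_P total_P] := count_tilings (uniq_P_region m) (large_fits_P m).
have sum_H := sum_nlarge_words m; have sum_P := sum_nlarge_words_not_ending1 m.
rewrite size_H_region /= in total_H; rewrite size_P_region /= in total_P.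
rewrite /= in num_H num_P.
rewrite -num_H -num_P in sum_H; rewrite -num_P in sum_P.
set tH := total_tiles (H_region m.+1) in total_H *.
set tP := total_tiles (P_region m.+1) in total_P *.
set NH := num_tilings (H_region m.+1) in total_H sum_H *.
set NP := num_tilings (P_region m.+1) in total_P sum_H sum_P *.
have tiles_H : 2 * tH%:R + 4 * NH%:R = 5 * m.+1%:R * NH%:R + 3 * NP%:R :> rat.
  by rewrite -!natrM -!natrD; congr _%:R; nia.
have tiles_P : 2 * tP%:R + 3 * NP%:R = 5 * m.+1%:R * NP%:R :> rat.
  by rewrite -!natrM -!natrD; congr _%:R; nia.
by split; [|split]; lra.
Qed.
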